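(* In the setting described in the context, with $\delta>0$, every interval in the barcode $\mathcal{B}(\ker f^\delta)$ is either of the form $[b,a+\delta)$ with $0<b\le a$ or equal to $[0,\delta)$. Moreover, an interval $[b,a+\delta)$ with $0<b\le a$ has multiplicity $\mathcal{M}^0_f(a,b)$ in $\mathcal{B}(\ker f^\delta)$, and $[0,\delta)$ has multiplicity $\dim\ker(h_0)$.
   Context: All vector spaces are over $\mathbb{Z}_2$. For a finite metric space $X$, $\mathrm{VR}_r(X)$ is the graph on $X$ with edges $[x,y]$ for $d^X(x,y)\le r$, and $\mathrm{PH}_0(X)$ is the persistence module $r\mapsto H_0(\mathrm{VR}_r(X))$ with structure maps $\rho_{rs}$ induced by inclusion; non-expansive maps induce persistence morphisms. Setting: $X\subseteq Z$, $X'\subseteq Z'$ finite metric spaces, $\varepsilon=d_{GH}((X,Z),(X',Z'))$. Fix a metric space $M$ and isometric embeddings $\gamma_Z,\gamma_{Z'}$ with $d^M_H(\gamma_Z(X),\gamma_{Z'}(X'))\le\varepsilon$ and $d^M_H(\gamma_Z(Z),\gamma_{Z'}(Z'))\le\varepsilon$, and maps $\alpha^Z\colon Z\to Z'$, $\alpha^{Z'}\colon Z'\to Z$ with $\alpha^Z(X)\subseteq X'$, $\alpha^{Z'}(X')\subseteq X$, moving points by at most $\varepsilon$ in $M$; $\alpha^X,\alpha^{X'}$ are their restrictions. $Y=\{(x,x')\in X\times X':\alpha^X(x)=x'\text{ or }\alpha^{X'}(x')=x\}$; $Y^\delta$ is $Y$ with distance $0$ between equal pairs and $\delta+d^X(x,y)$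 between distinct pairs $(x,x'),(y,y')$. The projection $\pi(x,x')=x$ is non-expansive $Y^\delta\to X$ and induces $h\colon W=\mathrm{PH}_0(Y^\delta)\to V=\mathrm{PH}_0(X)$, with degree-0 component $h_0$. $f\colon V\to U=\mathrm{PH}_0(Z)$ is induced by inclusion and $f^\delta=f\circ h$. With $\ker^+_b(U)=\ker\rho^U_{0b}$, $\ker^-_b(U)=\bigcup_{0\le r<b}\ker\rho^U_{0r}$ and $f_0$ the degree-0 component of $f$, $\mathcal{M}^0_f(a,b)=\dim\frac{f_0(\ker^+_a V)\cap \ker^+_b U}{f_0(\ker^-_a V)\cap\ker^+_b U+f_0(\ker^+_a V)\cap \ker^-_b U}$. The barcode of a pointwise finite-dimensional module is the multiset of intervals of its interval decomposition. *)

From HB Require Import structures.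
From mathcomp Require Import all_boot all_order all_algebra.
From mathcomp Require Import boolp classical_sets reals.
Set Implicit Arguments. Unset Strict Implicit. Unset Printing Implicit Defensive.
Import Order.TTheory GRing.Theory Num.Theory.
Local Open Scope ring_scope.
Local Open Scope classical_set_scope.

Section Metric.
Variable R : realType.

Definition is_metric (T : Type) (d : T -> T -> R) : Prop :=
  [/\ (forall x y, 0 <= d x y), (forall x y, d x y = 0 <-> x = y),
      (forall x y, d x y = d y x) & (forall x y z, d x z <= d x y + d y z)].

Definition isometric (T U : Type) (dT : T -> T -> R) (dU : U -> U -> R)
  (g : T -> U) : Prop := forall x y, dU (g x) (g y) = dT x y.

Definition hausdorff (M : Type) (d : M -> M -> R) (A B : set M) : R :=
  Num.max (sup [set inf [set d a b | b in B] | a in A])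
          (sup [set inf [set d a b | a in A] | b in B]).

Definition dGH_pair (TZ TZ' : Type) (dZ : TZ -> TZ -> R) (dZ' : TZ' -> TZ' -> R)
  (X : set TZ) (X' : set TZ') : R :=
  inf [set e | exists (M : Type) (dM : M -> M -> R) (gZ : TZ -> M) (gZ' : TZ' -> M),
        [/\ is_metric dM, isometric dZ dM gZ, isometric dZ' dM gZ' &
         e = Num.max (hausdorff dM (gZ @` X) (gZ' @` X'))
                     (hausdorff dM (gZ @` setT) (gZ' @` setT))]].

(** Chains over Z_2 on a finite vertex set, and H_0 of Vietoris-Rips graphs:
    H_0(VR_r(T)) = chain T / bdry d r. *)
Definition chain (T : finType) := 'rV['F_2]_#|T|.
Definition ch (T : finType) (x : T) : chain T := delta_mx 0 (enum_rank x).
Definition push (T U : finType) (g : T -> U) (v : chain T) : chain U :=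
  \sum_(x : T) v 0 (enum_rank x) *: ch (g x).
Definition bdry (T : finType) (d : T -> T -> R) (r : R) : {vspace chain T} :=
  <<[seq (ch p.1 + ch p.2)%R | p <- enum [pred p : T * T | (d p.1 p.2 <= r)%R]]>>%VS.
Definition spanS (T : finType) (P : chain T -> Prop) : {vspace chain T} :=
  <<[seq w <- enum (chain T) | `[< P w >] ]>>%VS.

(** A persistence submodule of PH_0(T) given at each
    r >= 0 by the preimage K r (a subspace of chains containing B r) of the
    subspace of H_0 = chain / B r, structure maps induced by identity on chains.
    An interval decomposition is an isomorphism with the direct sum of the
    interval modules Z_2[J i], i : I, given by the images [v i r] of the
    generators. *)
Definition is_interval (J : set R) : Prop :=
  [/\ (exists r, J r), (forall r, J r -> 0 <= r) &
      (forall r s t, J r -> J t -> r <= s -> s <= t -> J s)].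

Definition interval_decomp (T : finType) (K : R -> chain T -> Prop)
  (B : R -> {vspace chain T}) (I : Type) (J : I -> set R) (v : I -> R -> chain T) :
  Prop :=
  [/\ (forall i, is_interval (J i)) /\
      (forall i r, J i r -> K r (v i r)),
      (forall i r s, J i r -> J i s -> r <= s -> v i r - v i s \in B s),
      (forall i r s, J i r -> ~ J i s -> r <= s -> v i r \in B s),
      (forall r, 0 <= r -> forall n (f : 'I_n -> I), injective f ->
        (forall k, J (f k) r) -> \sum_(k < n) v (f k) r \in B r -> n = 0%N)
    & (forall r, 0 <= r -> forall w, K r w -> exists n (f : 'I_n -> I),
        (forall k, J (f k) r) /\ w - \sum_(k < n) v (f k) r \in B r)].

Definition has_card (I : Type) (P : I -> Prop) (m : nat) : Prop :=
  exists f : 'I_m -> I,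
    [/\ injective f, (forall k, P (f k)) & (forall i, P i -> exists k, f k = i)].

End Metric.

Definition pts (T : finType) (X : {set T}) := {x : T | x \in X}.
Definition dsub (R : realType) (T : finType) (d : T -> T -> R) (X : {set T})
  (x y : pts X) : R := d (val x) (val y).
Arguments dsub {R T} d X x y.

Section Ysp.
Variables (TZ TZ' : finType) (X : {set TZ}) (X' : {set TZ'}).
Variables (aZ : TZ -> TZ') (aZ' : TZ' -> TZ).

Definition Ypred (p : TZ * TZ') : bool :=
  [&& p.1 \in X, p.2 \in X' & (aZ p.1 == p.2) || (aZ' p.2 == p.1)].
Definition Ytype := {p : TZ * TZ' | Ypred p}.

Lemma Y_fst_in (p : Ytype) : (val p).1 \in X.
Proof. by case: p => -[x x'] /= /and3P []. Qed.

Definition piY (p : Ytype) : pts X := exist _ (val p).1 (Y_fst_in p).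

Definition dYdelta (R : realType) (dZ : TZ -> TZ -> R) (delta : R) (p q : Ytype) : R :=
  if p == q then 0 else delta + dZ (val p).1 (val q).1.
End Ysp.
Arguments piY {TZ TZ'} X X' aZ aZ' p.
Arguments dYdelta {TZ TZ'} X X' aZ aZ' {R} dZ delta p q.

Section Mult.
Variables (R : realType) (TZ : finType) (dZ : TZ -> TZ -> R) (X : {set TZ}).

(** M^0_f(a,b), computed with all subspaces of U_0 = chain Z / bdry dZ 0
    replaced by their preimages in chain Z (which all contain bdry dZ 0). *)
Definition kerp_img (a : R) : {vspace chain TZ} :=
  (spanS (fun w => exists v, v \in bdry (dsub dZ X) a /\ w = push val v)
     + bdry dZ 0)%VS.
Definition kerm_img (a : R) : {vspace chain TZ} :=
  (spanS (fun w => exists r, (0 <= r < a)%R /\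
                   exists v, v \in bdry (dsub dZ X) r /\ w = push val v)
     + bdry dZ 0)%VS.
Definition kerpU (b : R) : {vspace chain TZ} := bdry dZ b.
Definition kermU (b : R) : {vspace chain TZ} :=
  (spanS (fun w => exists r, (0 <= r < b)%R /\ w \in bdry dZ r) + bdry dZ 0)%VS.

Definition Mf0 (a b : R) : nat :=
  (\dim (kerp_img a :&: kerpU b)
   - \dim (kerm_img a :&: kerpU b + kerp_img a :&: kermU b))%N.
End Mult.

Section KerMod.
Variables (R : realType) (TZ TZ' : finType) (dZ : TZ -> TZ -> R).
Variables (X : {set TZ}) (X' : {set TZ'}) (aZ : TZ -> TZ') (aZ' : TZ' -> TZ).
Variable delta : R.

(** ker f^delta, f^delta = f o h : PH_0(Y^delta) -> PH_0(X) -> PH_0(Z):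
    at scale r, the preimage in chain Y of ker (f^delta)_r
    (to be taken modulo bdry (dYdelta dZ delta) r). *)
Definition ker_fdelta (r : R) (w : chain (Ytype X X' aZ aZ')) : Prop :=
  push val (push (piY X X' aZ aZ') w) \in bdry dZ r.

(** dim ker h_0, h_0 : H_0(VR_0(Y^delta)) -> H_0(VR_0(X)) *)
Definition dimker_h0 : nat :=
  (\dim (spanS (fun w : chain (Ytype X X' aZ aZ') =>
                  push (piY X X' aZ aZ') w \in bdry (dsub dZ X) 0))
   - \dim (bdry (dYdelta X X' aZ aZ' dZ delta) 0))%N.
End KerMod.
Arguments ker_fdelta {R TZ TZ'} dZ X X' aZ aZ' r w.
Arguments dimker_h0 {R TZ TZ'} dZ X X' aZ aZ' delta.
Arguments Mf0 {R TZ} dZ X a b.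

From HB Require Import structures.
From mathcomp Require Import all_boot all_order all_algebra.
From mathcomp Require Import boolp classical_sets reals.
Import Order.TTheory GRing.Theory Num.Theory.
Local Open Scope ring_scope.
Local Open Scope classical_set_scope.
Set Implicit Arguments. Unset Strict Implicit. Unset Printing Implicit Defensive.

(* Every point p of Y^delta lies within delta of (pi p, alpha^X (pi p)), and
   distinct points are at distance delta + d(pi p, pi q).  So Y^delta has no
   boundaries below scale delta, its boundaries at scale a + delta are the
   chains whose projection is a boundary of X at scale a, and the kernel K(r)
   of f^delta on chains contains the boundaries B(r) of Y^delta.
   K and B are filtrations by subspaces that are constant just after each
   scale, so a basis adapted to both yields an interval decomposition, and all
   bars are of the form [b, c).  Since there are no boundaries below delta,
   c >= delta; the generator at b is a boundary at c, hence lies in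
   K(c - delta), so b + delta <= c; and K(0) lies in B(delta), so a bar born
   at 0 ends at delta.
   The bars [b, c) are counted by dim P - dim (Wa + Wb), where P = K(b) cap B(c),
   Wa is the part of P dying before c and Wb the part born before b.  The map
   f^delta sends P, Wa, Wb onto f_0(ker^+_a V) cap ker^+_b U,
   f_0(ker^-_a V) cap ker^+_b U and f_0(ker^+_a V) cap ker^-_b U with a common
   kernel, which gives M^0_f(a, b) for c = a + delta. *)

Lemma F2_cases (a : 'F_2) : a = 0 \/ a = 1.
Proof. by case: a => [[|[|//]]] Hi; [left|right]; apply: val_inj. Qed.

Lemma F2_addrr (V : lmodType 'F_2) (x : V) : x + x = 0.
Proof.
have two0 : 2%:R = 0 :> 'F_2 by apply: val_inj.
by rewrite -mulr2n -scaler_nat two0 scale0r.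
Qed.

Lemma F2_subrE (V : lmodType 'F_2) (x y : V) : x - y = x + y.
Proof. by apply/eqP; rewrite subr_eq -addrA F2_addrr addr0. Qed.

Lemma single_inj (I : Type) (i : I) : injective (fun _ : 'I_1 => i).
Proof. by move=> a b _; rewrite (ord1 a) (ord1 b). Qed.
Arguments single_inj {I} i.

Section Families.
Variables (I : Type) (V : nmodType).

Lemma subfamily n (f : 'I_n -> I) (Q : pred 'I_n) : injective f ->
  exists m (g : 'I_m -> I), [/\ injective g, (forall j, exists2 k, Q k & g j = f k),
    (forall k, Q k -> exists j, g j = f k) &
    forall h : I -> V, \sum_(k | Q k) h (f k) = \sum_j h (g j)].
Proof.
move=> finj; exists #|Q|, (fun j => f (enum_val j)); split.
- by move=> j1 j2 /finj /enum_val_inj.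
- by move=> j; exists (enum_val j) => //; apply: enum_valP.
- by move=> k Qk; exists (enum_rank_in Qk k); rewrite enum_rankK_in.
- by move=> h; rewrite -(big_enum_val (fun k => h (f k))).
Qed.

Lemma disjoint_union_family n1 n2 (g1 : 'I_n1 -> I) (g2 : 'I_n2 -> I) :
  injective g1 -> injective g2 -> (forall j k, g1 j <> g2 k) ->
  exists g : 'I_(n1 + n2) -> I, [/\ injective g,
    (forall j, (exists k, g j = g1 k) \/ (exists k, g j = g2 k)),
    (forall k, exists j, g j = g1 k), (forall k, exists j, g j = g2 k) &
    forall h : I -> V, \sum_j h (g j) = \sum_j h (g1 j) + \sum_j h (g2 j)].
Proof.
move=> i1 i2 dis.
pose g j := match split j with inl a => g1 a | inr b => g2 b end.
have gl k : g (lshift n2 k) = g1 k by rewrite /g (unsplitK (inl _ k)).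
have gr k : g (rshift n1 k) = g2 k by rewrite /g (unsplitK (inr _ k)).
exists g; split.
- move=> j1 j2; rewrite /g.
  case: splitP => a1 e1; case: splitP => a2 e2.
  + by move/i1 => ea; apply: val_inj; rewrite /= e1 e2 ea.
  + by move/dis.
  + by move/esym/dis.
  + by move/i2 => ea; apply: val_inj; rewrite /= e1 e2 ea.
- by move=> j; rewrite /g; case: split => a; [left|right]; exists a.
- by move=> k; exists (lshift n2 k).
- by move=> k; exists (rshift n1 k).
- by move=> h; rewrite big_split_ord; congr (_ + _); apply: eq_bigr => k _; rewrite ?gl ?gr.
Qed.

End Families.

(* Over F_2 a repeated index cancels in pairs. *)
Lemma sum_injective_family (I : Type) (V : lmodType 'F_2) (h : I -> V) n (f : 'I_n -> I) :
  exists m (g : 'I_m -> I), [/\ injective g, (forall j, exists k, g j = f k) &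
    \sum_k h (f k) = \sum_j h (g j)].
Proof.
elim: n f => [|n IH] f.
  by exists 0%N, f; split; [case | case | rewrite !big_ord0].
have [m [g [gi gf gs]]] := IH (fun k => f (lift ord0 k)).
rewrite big_ord_recl gs.
have [[j0 ej0]|nj] := pselect (exists j, g j = f ord0).
  have [m' [g' [g'i g'f _ g's]]] := subfamily V (fun j => j != j0) gi.
  exists m', g'; split => //.
    by move=> j; have [k _ ->] := g'f j; have [k' ->] := gf k; exists (lift ord0 k').
  by rewrite -g's (bigD1 j0) //= ej0 addrA F2_addrr add0r.
have dis (a : 'I_1) k : f ord0 <> g k by move=> ek; apply: nj; exists k.
have [g1 [g1i g1f _ _ g1s]] := disjoint_union_family V (single_inj (f ord0)) gi dis.
exists (1 + m)%N, g1; split => //; last by rewrite g1s big_ord1.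
move=> j; case: (g1f j) => -[k ->]; first by exists ord0.
by have [k' ->] := gf k; exists (lift ord0 k').
Qed.

Section QuotientCount.
Variables (vT : vectType 'F_2) (I : Type) (S : I -> Prop) (u : I -> vT).
Variables (P W : {vspace vT}).
Hypothesis WP : (W <= P)%VS.
Hypothesis uP : forall i, S i -> u i \in P.
Hypothesis family_indep : forall m (g : 'I_m -> I), injective g -> (forall j, S (g j)) ->
  \sum_j u (g j) \in W -> m = 0%N.
Hypothesis family_span : forall w, w \in P ->
  exists m (g : 'I_m -> I), (forall j, S (g j)) /\ w - \sum_j u (g j) \in W.

Lemma family_coef0 m (g : 'I_m -> I) : injective g -> (forall j, S (g j)) ->
  forall cf : 'I_m -> 'F_2, \sum_j cf j *: u (g j) \in W -> forall j, cf j = 0.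
Proof.
move=> gi gS cf; rewrite (eq_bigr (fun j => if cf j != 0 then u (g j) else 0)); last first.
  by move=> j _; case: (F2_cases (cf j)) => ->; rewrite ?scale0r ?scale1r.
rewrite -big_mkcond /=.
have [m' [g' [g'i g'f g'f' ->]]] := subfamily vT (fun j => cf j != 0) gi.
have g'S j : S (g' j) by have [k _ ->] := g'f j.
move=> /(family_indep g'i g'S) m'0 j; apply/eqP; apply: contraT => /g'f' [j' _].
by move: j'; rewrite m'0 => -[].
Qed.

Lemma dim_family_addv m (g : 'I_m -> I) : injective g -> (forall j, S (g j)) ->
  \dim (<<[tuple u (g j) | j < m]>> + W)%VS = (m + \dim W)%N.
Proof.
move=> gi gS; set X := [tuple u (g j) | j < m].
have sumX (cf : 'I_m -> 'F_2) : \sum_i cf i *: X`_i = \sum_j cf j *: u (g j).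
  by apply: eq_bigr => j _; rewrite nth_mktuple.
have freeX : free X.
  apply/freeP => cf Hcf; apply: (family_coef0 gi gS).
  by rewrite -sumX Hcf mem0v.
have capX : (<<X>> :&: W = 0)%VS.
  apply/eqP; rewrite -subv0; apply/subvP => y /memv_capP [yX yW]; rewrite memv0.
  rewrite (coord_span yX) big1 // => i _.
  by rewrite (family_coef0 gi gS (cf := coord X ^~ y)) ?scale0r // -sumX -coord_span.
by rewrite dimv_disjoint_sum // (eqP freeX) size_tuple.
Qed.

Lemma family_addv_sub m (g : 'I_m -> I) : (forall j, S (g j)) ->
  (<<[tuple u (g j) | j < m]>> + W <= P)%VS.
Proof.
move=> gS; rewrite subv_add WP andbT; apply/span_subvP => x /mapP [j _ ->].
exact: uP.
Qed.

Lemma has_card_quotient : has_card S (\dim P - \dim W).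
Proof.
pose fam m := `[< exists g : 'I_m -> I, injective g /\ forall j, S (g j) >].
have fam0 : exists m, fam m.
  have g0 : 'I_0 -> I by case.
  by exists 0%N; apply/asboolP; exists g0; split; case.
have fam_ub m : fam m -> (m <= \dim P - \dim W)%N.
  move=> /asboolP [g [gi gS]]; rewrite -(leq_add2r (\dim W)) subnK ?dimvS //.
  by rewrite -(dim_family_addv gi gS) dimvS // family_addv_sub.
case: (ex_maxnP fam0 fam_ub) => m /asboolP [g [gi gS]] gmax.
have g_onto i : S i -> exists j, g j = i.
  move=> Si; apply: contrapT => nex.
  have dis j (a : 'I_1) : g j <> i by move=> e; apply: nex; exists j.
  have [h [hi hor _ _ _]] := disjoint_union_family vT gi (single_inj i) dis.
  suff /gmax : fam (m + 1)%N by rewrite addn1 ltnn.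
  by apply/asboolP; exists h; split => // k; case: (hor k) => -[a ->].
have PX : (P <= <<[tuple u (g j) | j < m]>> + W)%VS.
  apply/subvP => w /family_span [n [f [fS fW]]].
  rewrite -(subrK (\sum_j u (f j)) w) addrC; apply: memv_add => //.
  apply: memv_suml => k _; have [j <-] := g_onto _ (fS k).
  by apply: memv_span; apply/mapP; exists j; rewrite ?mem_enum.
have -> : \dim P = (m + \dim W)%N.
  rewrite -(dim_family_addv gi gS); apply/eqP.
  by rewrite eqn_leq (dimvS PX) dimvS // family_addv_sub.
by rewrite addnK; exists g.
Qed.

End QuotientCount.

Section IntervalDecomposition.
Variables (R : realType) (T : finType) (K : R -> chain T -> Prop).
Variables (B : R -> {vspace chain T}) (I : Type) (J : I -> set R) (v : I -> R -> chain T).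
Hypothesis hD : interval_decomp K B J v.
Hypothesis B_mono : forall r s, r <= s -> (B r <= B s)%VS.

Let bar_interval : forall i, is_interval (J i). Proof. by case: hD => -[]. Qed.
Let gen_K : forall i r, J i r -> K r (v i r). Proof. by case: hD => -[]. Qed.
Let gen_transport : forall i r s, J i r -> J i s -> r <= s -> v i r - v i s \in B s.
Proof. by case: hD. Qed.
Let gen_dies : forall i r s, J i r -> ~ J i s -> r <= s -> v i r \in B s.
Proof. by case: hD. Qed.
Let gen_free : forall r, 0 <= r -> forall n (f : 'I_n -> I), injective f ->
  (forall k, J (f k) r) -> \sum_(k < n) v (f k) r \in B r -> n = 0%N.
Proof. by case: hD. Qed.
Let gen_span : forall r, 0 <= r -> forall w, K r w -> exists n (f : 'I_n -> I),
  (forall k, J (f k) r) /\ w - \sum_(k < n) v (f k) r \in B r.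
Proof. by case: hD. Qed.

Lemma bar_ge0 i r : J i r -> 0 <= r.
Proof. by case: (bar_interval i) => _ + _; apply. Qed.

Lemma bar_convex i r s t : J i r -> J i t -> r <= s -> s <= t -> J i s.
Proof. by case: (bar_interval i) => _ _; apply. Qed.

Lemma gen_span_inj r w : 0 <= r -> K r w -> exists n (f : 'I_n -> I),
  [/\ injective f, (forall k, J (f k) r) & w - \sum_k v (f k) r \in B r].
Proof.
move=> r0 /(gen_span r0) [n [f [fJ fB]]].
have [m [g [gi gf gs]]] := sum_injective_family (v ^~ r) f.
by exists m, g; split; rewrite -?gs // => j; have [k ->] := gf j.
Qed.

Lemma gen_span_later r s x : 0 <= r -> r <= s -> K r x -> exists m (g : 'I_m -> I),
  [/\ injective g, (forall k, J (g k) r /\ J (g k) s) & x - \sum_k v (g k) s \in B s].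
Proof.
move=> r0 rs /(gen_span_inj r0) [n [f [fi fJ fB]]].
have [m [g [gi gf _ gs]]] := subfamily (chain T) (fun k => `[< J (f k) s >]) fi.
exists m, g; split => //; first by move=> j; have [k /asboolP Jk ->] := gf j.
rewrite -(gs (v ^~ s)) big_mkcond /= -(subrK (\sum_k v (f k) r) x) -addrA.
rewrite rpredDl; last exact: subvP (B_mono rs) _ fB.
rewrite -sumrB; apply: memv_suml => k _; case: asboolP => Jks.
  exact: gen_transport.
by rewrite subr0; apply: gen_dies.
Qed.

Lemma gen_notin_bdry i r : J i r -> v i r \notin B r.
Proof.
move=> Jr; apply/negP => vB.
have := @gen_free r (bar_ge0 Jr) 1 _ (single_inj i) (fun=> Jr).
by rewrite big_ord1 => /(_ vB).
Qed.

Lemma gen_notin_K_before i r' r : 0 <= r' -> r' <= r -> J i r -> ~ J i r' ->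
  ~ K r' (v i r).
Proof.
move=> r0 rr Jr nJ /(gen_span_later r0 rr) [m [g [gi gJ gB]]].
have dis (a : 'I_1) k : i <> g k by move=> ei; apply: nJ; rewrite ei; case: (gJ k).
have [h [hi hor _ _ hs]] := disjoint_union_family (chain T) (single_inj i) gi dis.
have hJ k : J (h k) r by case: (hor k) => -[a ->]; [exact: Jr | case: (gJ a)].
have := gen_free (le_trans r0 rr) hi hJ.
by rewrite (hs (v ^~ r)) big_ord1 -F2_subrE => /(_ gB).
Qed.

Lemma bar_eq_Ico i b c : J i b -> ~ J i c -> b <= c ->
  (forall r, 0 <= r < b -> ~ J i r) -> (forall s, b <= s < c -> J i s) ->
  J i = [set r | b <= r < c].
Proof.
move=> Jb nJc bc born alive; apply/seteqP; split => t /=; last exact: alive.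
move=> Jt; have bt : b <= t.
  by rewrite leNgt; apply/negP => tb; apply: (born t) => //; rewrite (bar_ge0 Jt).
rewrite bt ltNge; apply/negP => ct.
exact: nJc (bar_convex Jb Jt bc ct).
Qed.

Section BarShape.
Hypothesis K_right : forall r, exists2 eta, 0 < eta &
  forall s, r <= s -> s < r + eta -> forall x, K s x -> K r x.
Hypothesis B_right : forall r, exists2 eta, 0 < eta &
  forall s, r <= s -> s < r + eta -> (B s <= B r)%VS.
Hypothesis K_eventually_B : exists D, forall r, D <= r -> forall x, K r x -> x \in B r.
Variable i : I.

Let bar_has_sup : has_sup (J i).
Proof.
have [r0 Jr0] : exists r, J i r by case: (bar_interval i).
split; first by exists r0.
have [D HD] := K_eventually_B; exists D => r Jr; rewrite leNgt; apply/negP => /ltW Dr.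
by have := gen_notin_bdry Jr; rewrite (HD r Dr _ (gen_K Jr)).
Qed.

Let bar_has_inf : has_inf (J i).
Proof. by split; [case: bar_has_sup | exists 0 => r /bar_ge0]. Qed.

Lemma bar_inf_mem : J i (inf (J i)).
Proof.
apply: contrapT => nb; have b0 : 0 <= inf (J i).
  by apply: lb_le_inf; [case: bar_has_inf | move=> r /bar_ge0].
have [eta eta0 Heta] := K_right (inf (J i)).
have [r Jr rlt] := inf_adherent eta0 bar_has_inf.
have br : inf (J i) <= r := ge_inf bar_has_inf.2 Jr.
exact: gen_notin_K_before b0 br Jr nb (Heta _ br rlt _ (gen_K Jr)).
Qed.

Lemma bar_sup_notin : ~ J i (sup (J i)).
Proof.
set c := sup (J i) => Jc; have [eta eta0 Heta] := B_right c.
have cs : c < c + eta / 2 by rewrite ltrDl divr_gt0.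
have sl : c + eta / 2 < c + eta by rewrite ltrD2l ltr_pdivrMr // ltr_pMr // ltr1n.
have nJs : ~ J i (c + eta / 2).
  by move=> /(sup_upper_bound bar_has_sup); rewrite leNgt cs.
have := gen_dies Jc nJs (ltW cs) => /(subvP (Heta _ (ltW cs) sl)).
by apply/negP; apply: gen_notin_bdry.
Qed.

Lemma bar_Ico : exists b c, 0 <= b < c /\ J i = [set r | b <= r < c].
Proof.
have bJ := bar_inf_mem; have cJ := bar_sup_notin.
have Jc t : J i t -> t < sup (J i).
  move=> Jt; rewrite lt_neqAle (sup_upper_bound bar_has_sup Jt) andbT.
  by apply/eqP => etc; apply: cJ; rewrite -etc.
exists (inf (J i)), (sup (J i)); rewrite (bar_ge0 bJ) (Jc _ bJ); split => //.
apply/seteqP; split => t /=; first by move=> Jt; rewrite (ge_inf bar_has_inf.2 Jt) Jc.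
move=> /andP [bt tc]; have ct : 0 < sup (J i) - t by rewrite subr_gt0.
have [e Je elt] := sup_adherent ct bar_has_sup.
by apply: bar_convex bJ Je bt (ltW _); rewrite opprB addrC subrK in elt.
Qed.

End BarShape.

Lemma bar_Ico_delta_le (delta : R) i b c :
  (forall r, r < delta -> B r = 0%VS) ->
  (forall a x, 0 <= a -> x \in B (a + delta) -> K a x) ->
  0 <= b < c -> J i = [set r | b <= r < c] -> b + delta <= c.
Proof.
move=> B_small BK /andP [b0 bc] Ji.
have Jb : J i b by rewrite Ji /= lexx bc.
have vB : v i b \in B c by apply: gen_dies Jb _ (ltW bc); rewrite Ji /= ltxx andbF.
have dc : delta <= c.
  rewrite leNgt; apply/negP => cd; move: vB; rewrite B_small // memv0 => /eqP vb0.
  by have := gen_notin_bdry Jb; rewrite vb0 mem0v.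
have a0 : 0 <= c - delta by rewrite subr_ge0.
have Ka : K (c - delta) (v i b) by apply: BK; rewrite ?subrK.
rewrite -lerBrDr leNgt; apply/negP => ab.
have nJa : ~ J i (c - delta) by rewrite Ji /= leNgt ab.
exact: gen_notin_K_before a0 (ltW ab) Jb nJa Ka.
Qed.

Lemma bar_Ico0_end (delta : R) i c : 0 < delta -> (forall x, K 0 x -> x \in B delta) ->
  delta <= c -> J i = [set r | 0 <= r < c] -> c = delta.
Proof.
move=> d0 K0 dc Ji; apply/eqP; rewrite eq_le dc andbT leNgt; apply/negP => dlt.
have Jd : J i delta by rewrite Ji /= (ltW d0) dlt.
have J0 : J i 0 by rewrite Ji /= lexx (lt_trans d0 dlt).
have := gen_transport J0 Jd (ltW d0).
by rewrite rpredBl; [apply/negP/gen_notin_bdry | apply/K0/gen_K].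
Qed.

Lemma bar_delta_shape (delta : R) i b c : 0 < delta ->
  (forall r, r < delta -> B r = 0%VS) ->
  (forall a x, 0 <= a -> x \in B (a + delta) -> K a x) ->
  (forall x, K 0 x -> x \in B delta) ->
  0 <= b < c -> J i = [set r | b <= r < c] ->
  (exists a b, 0 < b <= a /\ J i = [set r | b <= r < a + delta])
    \/ J i = [set r | 0 <= r < delta].
Proof.
move=> d0 B_small BK K0 bc Ji; have bdc := bar_Ico_delta_le B_small BK bc Ji.
case/andP: bc => b0 _; have [b_0|bn0] := eqVneq b 0; [right | left].
  rewrite b_0 add0r in Ji bdc.
  by rewrite Ji (bar_Ico0_end d0 K0 bdc Ji).
by exists (c - delta), b; rewrite subrK Ji lerBrDr bdc lt_neqAle eq_sym bn0 b0.
Qed.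

Lemma gen_span_dead b c w n (f : 'I_n -> I) : 0 <= c -> b <= c -> injective f ->
  (forall k, J (f k) b) -> w \in B c -> w - \sum_k v (f k) b \in B b ->
  forall k, ~ J (f k) c.
Proof.
move=> c0 bc fi fJ wB fB.
have [m [g [gi gf gf' gs]]] := subfamily (chain T) (fun k => `[< J (f k) c >]) fi.
have gJ j : J (g j) c by have [k /asboolP ? ->] := gf j.
suff /(gen_free c0 gi gJ) m0 : \sum_j v (g j) c \in B c.
  by move=> k Jc; have [j _] := gf' k (asboolT Jc); move: j; rewrite m0 => -[].
have sumB : \sum_k v (f k) b \in B c.
  by rewrite -(rpredBl _ wB) (subvP (B_mono bc)).
rewrite (bigID (fun k => `[< J (f k) c >])) /= rpredDr in sumB; last first.
  by apply: memv_suml => k /asboolPn nJ; apply: gen_dies.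
rewrite -(gs (v ^~ c)) -(rpredBl _ sumB) -sumrB.
by apply: memv_suml => k /asboolP Jc; apply: gen_transport.
Qed.

Section CountIco.
Hypothesis K_mono : forall r s x, r <= s -> K r x -> K s x.
Hypothesis B_sub_K : forall r x, 0 <= r -> x \in B r -> K r x.
Variables (b c : R) (Wa Wb : {vspace chain T}).
Hypotheses (b_ge0 : 0 <= b) (b_lt_c : b < c).
Hypothesis memWa : forall x, x \in Wa <-> K b x /\ exists2 s, s < c & x \in B s.
(* The disjunct [x = 0] lets [Wb = 0] qualify when [b = 0]. *)
Hypothesis memWb : forall x,
  x \in Wb <-> x \in B c /\ (x = 0 \/ exists r, [/\ 0 <= r, r < b & K r x]).

Let Ico i := J i = [set r | b <= r < c].

Lemma bdry_sub_Wa : (B b <= Wa)%VS.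
Proof. by apply/subvP => x xB; apply/memWa; split; [exact: B_sub_K | exists b]. Qed.

(* At scale [max s b] a relation modulo [Wa + Wb] becomes a relation among
   generators alive there: the [b, c) ones and those spanning the [Wb] part. *)
Lemma Ico_family_indep m (g : 'I_m -> I) : injective g -> (forall j, Ico (g j)) ->
  \sum_j v (g j) b \in (Wa + Wb)%VS -> m = 0%N.
Proof.
move=> gi gS /memv_addP [xa /memWa [_ [s sc xaB]] [xb /memWb [_ xb0r] Hsum]].
pose s' := Num.max s b.
have bs' : b <= s' by rewrite le_max lexx orbT.
have s'c : s' < c by rewrite gt_max sc b_lt_c.
have xaB' : xa \in B s' by apply: subvP (B_mono _) _ xaB; rewrite le_max lexx.
have gJ j : J (g j) s' by rewrite (gS j) /= bs'.
have [m' [g' [g'i g'J g'B]]] : exists m' (g' : 'I_m' -> I), [/\ injective g',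
    forall k, J (g' k) s' /\ ~ Ico (g' k) & xb - \sum_k v (g' k) s' \in B s'].
  case: xb0r => [-> | [r [r0 rb Kr]]].
    have g0 : 'I_0 -> I by case.
    by exists 0%N, g0; split; [case | case | rewrite big_ord0 subr0 mem0v].
  have [m' [g' [g'i g'J g'B]]] := gen_span_later r0 (ltW (lt_le_trans rb bs')) Kr.
  exists m', g'; split => // k; split; first by case: (g'J k).
  by move=> Sk; have := (g'J k).1; rewrite Sk /= leNgt rb.
have dis j k : g j <> g' k by move=> e; apply: (g'J k).2; rewrite -e.
have [h [hi hor _ _ hs]] := disjoint_union_family (chain T) gi g'i dis.
have hJ k : J (h k) s' by case: (hor k) => -[a ->]; [exact: gJ | case: (g'J a)].
suff /(gen_free (le_trans b_ge0 bs') hi hJ)/eqP : \sum_j v (h j) s' \in B s'.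
  by rewrite addn_eq0 => /andP [/eqP].
have transport : \sum_j v (g j) b - \sum_j v (g j) s' \in B s'.
  rewrite -sumrB; apply: memv_suml => j _; apply: gen_transport => //.
  by rewrite (gS j) /= lexx b_lt_c.
rewrite (hs (v ^~ s')); move: transport g'B; rewrite Hsum !F2_subrE => t g'B.
by rewrite -(rpredDl _ g'B) addrACA F2_addrr addr0 -(rpredDl _ xaB') addrA.
Qed.

Lemma gen_in_W_of_not_Ico i : J i b -> ~ J i c -> ~ Ico i -> v i b \in (Wa + Wb)%VS.
Proof.
move=> Jb nJc nS.
have [[r /andP [r0 rb] Jr]|born] := pselect (exists2 r, 0 <= r < b & J i r).
  have vr : v i r \in (Wa + Wb)%VS.
    apply: subvP (addvSr Wa Wb) _ _; apply/memWb; split.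
      exact: gen_dies Jr nJc (ltW (lt_trans rb b_lt_c)).
    by right; exists r; split => //; apply: gen_K.
  rewrite -(rpredBl _ vr); apply: subvP (addvSl _ _) _ _.
  exact: subvP bdry_sub_Wa _ (gen_transport Jr Jb (ltW rb)).
have [[s /andP [bs sc] nJs]|alive] := pselect (exists2 s, b <= s < c & ~ J i s).
  apply: subvP (addvSl _ _) _ _; apply/memWa; split; first exact: gen_K.
  by exists s => //; apply: gen_dies Jb nJs bs.
exfalso; apply: nS; apply: bar_eq_Ico Jb nJc (ltW b_lt_c) _ _ => [r rb Jr|s sc].
  by apply: born; exists r.
by apply: contrapT => nJs; apply: alive; exists s.
Qed.

Lemma Ico_family_span w : K b w -> w \in B c -> exists m (g : 'I_m -> I),
  (forall j, Ico (g j)) /\ w - \sum_j v (g j) b \in (Wa + Wb)%VS.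
Proof.
move=> Kw wB; have [n [f [fi fJ fB]]] := gen_span_inj b_ge0 Kw.
have c0 : 0 <= c := le_trans b_ge0 (ltW b_lt_c).
have dead := gen_span_dead c0 (ltW b_lt_c) fi fJ wB fB.
have [m [g [gi gf _ gs]]] := subfamily (chain T) (fun k => `[< Ico (f k) >]) fi.
exists m, g; split; first by move=> j; have [k /asboolP ? ->] := gf j.
have := subvP (addvSl Wa Wb) _ (subvP bdry_sub_Wa _ fB).
rewrite -(gs (v ^~ b)) (bigID (fun k => `[< Ico (f k) >])) /= opprD addrA rpredBr //.
apply: memv_suml => k /asboolPn nS; exact: gen_in_W_of_not_Ico.
Qed.

Lemma count_Ico_bars (P : {vspace chain T}) :
  (forall x, x \in P <-> K b x /\ x \in B c) ->
  has_card Ico (\dim P - \dim (Wa + Wb)).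
Proof.
move=> memP; apply: (has_card_quotient (u := v ^~ b)).
- rewrite subv_add; apply/andP; split; apply/subvP => x.
    move=> /memWa [Kx [s sc xB]]; apply/memP; split => //.
    exact: subvP (B_mono (ltW sc)) _ xB.
  move=> /memWb [xB [->|[r [r0 rb Kr]]]]; apply/memP; split; rewrite ?mem0v //.
    exact: B_sub_K b_ge0 (mem0v _).
  exact: K_mono (ltW rb) Kr.
- move=> i Si; have Jb : J i b by rewrite Si /= lexx b_lt_c.
  apply/memP; split; first exact: gen_K.
  by apply: gen_dies Jb _ (ltW b_lt_c); rewrite Si /= ltxx andbF.
- exact: Ico_family_indep.
- by move=> w /memP [Kw wB]; apply: Ico_family_span.
Qed.

End CountIco.

End IntervalDecomposition.

Lemma exists_min_measure (Y : Type) (P : Y -> Prop) (m : Y -> nat) :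
  (exists x, P x) -> exists x, P x /\ forall y, P y -> (m x <= m y)%N.
Proof.
move=> [x0 Px0].
have ex : exists n, `[< exists x, P x /\ m x = n >].
  by exists (m x0); apply/asboolP; exists x0.
case: (ex_minnP ex) => n /asboolP [x [Px <-]] minn.
by exists x; split => // y Py; apply: minn; apply/asboolP; exists y.
Qed.

Lemma exists_max_measure (Y : Type) (P : Y -> Prop) (m : Y -> nat) N :
  (forall x, (m x <= N)%N) -> (exists x, P x) ->
  exists x, P x /\ forall y, P y -> (m y <= m x)%N.
Proof.
move=> mN /(exists_min_measure (fun y => N - m y)%N) [x [Px xmin]].
exists x; split => // y Py; rewrite leqNgt; apply/negP => lt.
by have := ltn_sub2l (leq_trans lt (mN y)) lt; rewrite ltnNge xmin.
Qed.

Section AdaptedBasis.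
Variables (F : fieldType) (vT : vectType F) (O : Type).

Definition adapted (C : O -> {vspace vT}) (e : seq vT) :=
  forall o, (C o :&: <<e>> <= <<[seq y <- e | y \in C o]>>)%VS.

Section Chain.
Variable C : O -> {vspace vT}.
Hypothesis C_chain : forall o1 o2, (C o1 <= C o2)%VS \/ (C o2 <= C o1)%VS.

Lemma chain_min_above (Q : {vspace vT} -> bool) : (exists o, ~~ Q (C o)) ->
  exists o0, ~~ Q (C o0) /\ forall o, (C o0 <= C o)%VS \/ Q (C o).
Proof.
move=> /(exists_min_measure (fun o => \dim (C o))) [o0 [nQ0 min0]].
exists o0; split => // o; case: (C_chain o0 o) => [|oo0]; first by left.
case: (boolP (Q (C o))) => [|/min0]; first by right.
by rewrite (geq_leqif (dimv_leqif_eq oo0)) => /eqP <-; left.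
Qed.

Lemma chain_max_below o0 : exists L : {vspace vT},
  (L = 0%VS \/ exists2 o, ~~ (C o0 <= C o)%VS & L = C o) /\
  forall o, (C o0 <= C o)%VS \/ (C o <= L)%VS.
Proof.
have [ex|nex] := pselect (exists o, ~~ (C o0 <= C o)%VS); last first.
  exists 0%VS; split; first by left.
  by move=> o; left; apply: contrapT => /negP no; apply: nex; exists o.
have [oL [nL maxL]] :=
  exists_max_measure (m := fun o => \dim (C o)) (fun o => dimvS (subvf (C o))) ex.
exists (C oL); split; first by right; exists oL.
move=> o; case: (boolP (C o0 <= C o)%VS) => [|/maxL Lo]; first by left.
right; case: (C_chain oL o) => // oLo.
by move: Lo; rewrite (geq_leqif (dimv_leqif_eq oLo)) => /eqP ->.
Qed.

Lemma adapted_cons e x : adapted C e ->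
  (forall o, x \notin C o -> (C o :&: <<x :: e>> <= <<e>>)%VS) -> adapted C (x :: e).
Proof.
move=> adC Hx o; apply/subvP => y yCe; have /memv_capP [yC] := yCe.
rewrite span_cons => /memv_addP [_ /vlineP [k ->] [u uU eyu]].
case xC: (x \in C o); rewrite /= xC; last first.
  by apply: subvP (adC o) _ _; rewrite memv_cap yC (subvP (Hx o (negbT xC))).
rewrite span_cons eyu; apply: memv_add; first exact/memvZ/memv_line.
apply: subvP (adC o) _ _; rewrite memv_cap uU andbT.
by rewrite -(rpredDl _ (memvZ k xC)) -eyu.
Qed.

End Chain.

Lemma capv_span_cons (L : {vspace vT}) e x : x \notin (<<e>> + L)%VS ->
  (L :&: <<x :: e>> <= <<e>>)%VS.
Proof.
move=> xnUL; apply/subvP => y /memv_capP [yL].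
rewrite span_cons => /memv_addP [_ /vlineP [k ->] [u uU eyu]].
have [k0|kn0] := eqVneq k 0; first by rewrite eyu k0 scale0r add0r.
case/negP: xnUL; rewrite -[x](scalerK kn0) -(addrK u (k *: x)) addrC -eyu.
rewrite memvZ // memvD // ?memvN.
  exact: subvP (addvSl _ _) _ _.
exact: subvP (addvSr _ _) _ _.
Qed.

Lemma capv_sub_addv (U L A B : {vspace vT}) : (U <= A)%VS -> (L :&: A <= U)%VS ->
  (A :&: B <= U + L)%VS -> (B :&: A <= U)%VS.
Proof.
move=> UA LAU ABUL; apply/subvP => z /memv_capP [zB zA].
have /memv_addP [u uU [y yL ezy]] : z \in (U + L)%VS.
  by apply: subvP ABUL _ _; rewrite memv_cap zA zB.
have yA : y \in A by rewrite -(rpredDl _ (subvP UA _ uU)) -ezy.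
by rewrite ezy memvD // (subvP LAU) // memv_cap yL yA.
Qed.

Section TwoChains.
Variables A B : O -> {vspace vT}.
Hypothesis A_chain : forall o1 o2, (A o1 <= A o2)%VS \/ (A o2 <= A o1)%VS.
Hypothesis B_chain : forall o1 o2, (B o1 <= B o2)%VS \/ (B o2 <= B o1)%VS.
Hypothesis A_full : exists o, A o = fullv.
Hypothesis B_full : exists o, B o = fullv.

Let comparable_A (U : {vspace vT}) := forall o, ~~ (A o <= U)%VS -> (U <= A o)%VS.

(* x is taken in the first A-space not inside <<e>> and in the smallest B-space
   meeting it outside <<e>>, but outside <<e>> + L for the B-space L just below:
   then each A o and B o either contains x or meets <<x :: e>> inside <<e>>. *)
Lemma adapted_extend e : free e -> adapted A e -> adapted B e -> comparable_A <<e>> ->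
  (<<e>> != fullv)%VS -> exists x, [/\ free (x :: e), adapted A (x :: e),
    adapted B (x :: e) & comparable_A <<x :: e>>].
Proof.
move=> fe adA adB cmpA nfull; set U := <<e>>%VS.
have exA : exists o, ~~ (A o <= U)%VS.
  have [o Ao] := A_full; exists o; apply: contra nfull.
  by rewrite Ao eqEsubv subvf.
have [oA [nAU Acmp]] := chain_min_above A_chain (Q := fun W => W <= U)%VS exA.
have UA : (U <= A oA)%VS := cmpA _ nAU.
have exB : exists o, ~~ (B o :&: A oA <= U)%VS.
  by have [o Bo] := B_full; exists o; rewrite Bo capfv.
have [oB [nBU Bcmp]] := chain_min_above B_chain (Q := fun W => W :&: A oA <= U)%VS exB.
have [L [L_def Lcmp]] := chain_max_below B_chain oB.
have LAU : (L :&: A oA <= U)%VS.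
  case: L_def => [->|[o nBo ->]]; first by rewrite cap0v sub0v.
  by case: (Bcmp o) => // oBo; rewrite oBo in nBo.
have [x /memv_capP [xA xB] xnUL] :
    exists2 x, x \in (A oA :&: B oB)%VS & x \notin (U + L)%VS.
  by apply/subvPn; apply: contra nBU; apply: capv_sub_addv.
have xnU : x \notin U by apply: contra xnUL; apply: subvP (addvSl _ _) _.
exists x; split.
- by rewrite free_cons fe andbT.
- apply: adapted_cons => // o xnA; case: (Acmp o) => [/subvP/(_ _ xA)|AU].
    by rewrite (negbTE xnA).
  exact: subv_trans (capvSl _ _) AU.
- apply: adapted_cons => // o xnB; case: (Lcmp o) => [/subvP/(_ _ xB)|BL].
    by rewrite (negbTE xnB).
  exact: subv_trans (capvS BL (subvv _)) (capv_span_cons xnUL).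
- move=> o nAo; have nAoU : ~~ (A o <= U)%VS.
    by apply: contra nAo => AU; apply: subv_trans AU _; rewrite span_cons addvSr.
  rewrite span_cons subv_add (cmpA _ nAoU) andbT -memvE.
  case: (Acmp o) => [/subvP/(_ _ xA) //|AU].
  by rewrite AU in nAoU.
Qed.

Lemma exists_adapted_basis :
  exists e : seq vT, [/\ free e, <<e>>%VS = fullv, adapted A e & adapted B e].
Proof.
suff ext n e : (\dim {:vT} - \dim <<e>> <= n)%N -> free e -> adapted A e ->
    adapted B e -> comparable_A <<e>> ->
    exists e', [/\ free e', <<e'>>%VS = fullv, adapted A e' & adapted B e'].
  apply: (ext _ [::]) => //; first by rewrite /free span_nil dimv0.
  - by move=> o; rewrite span_nil capv0 sub0v.
  - by move=> o; rewrite span_nil capv0 sub0v.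
  - by move=> o _; rewrite span_nil sub0v.
elim: n e => [|n IH] e de fe aA aB cA.
  exists e; split => //; apply/eqP; rewrite eqEsubv subvf /=.
  by rewrite -(geq_leqif (dimv_leqif_sup (subvf <<e>>%VS))) -subn_eq0 -leqn0.
have [ef|nf] := eqVneq <<e>>%VS fullv; first by exists e.
have [x [fx aAx aBx cAx]] := adapted_extend fe aA aB cA nf.
apply: (IH (x :: e)) => //; rewrite (eqP fx) /=; move: de; rewrite (eqP fe).
by rewrite subnS -subn1 leq_subLR => h; rewrite -subnDA leq_subLR -addnA add1n.
Qed.

End TwoChains.

End AdaptedBasis.

Lemma coord_span_filter (F : fieldType) (vT : vectType F) (e : seq vT) (P : pred vT)
  (j : 'I_(size e)) y :
  free e -> y \in <<[seq x <- e | P x]>>%VS -> ~~ P e`_j -> coord (in_tuple e) j y = 0.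
Proof.
move=> fe yS nP; set fl := [seq x <- e | P x] in yS.
rewrite (coord_span (X := in_tuple fl) yS) linear_sum big1 // => i _; rewrite linearZ /=.
have : fl`_i \in fl by apply: mem_nth.
rewrite mem_filter => /andP [Px xe]; set x := fl`_i in Px xe *.
have ix : (index x e < size e)%N by rewrite index_mem.
rewrite -(nth_index 0 xe) -[index x e]/(nat_of_ord (Ordinal ix)).
rewrite (@coord_free _ _ _ (in_tuple e) (Ordinal ix) j fe).
case: eqP => [eij|_]; last by rewrite mulr0.
by move: nP; rewrite -eij /= nth_index // Px.
Qed.

Section BasisDecomposition.
Variables (R : realType) (T : finType) (Kv B : R -> {vspace chain T}).
Hypothesis Kv_mono : forall r s, r <= s -> (Kv r <= Kv s)%VS.
Hypothesis B_mono : forall r s, r <= s -> (B r <= B s)%VS.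
Variable e : seq (chain T).
Hypotheses (e_free : free e) (e_full : <<e>>%VS = fullv).
Hypothesis e_Kv : forall r, (Kv r <= <<[seq x <- e | x \in Kv r]>>)%VS.
Hypothesis e_B : forall r, (B r <= <<[seq x <- e | x \in B r]>>)%VS.

Definition alive (j : 'I_(size e)) r := [&& 0 <= r, e`_j \in Kv r & e`_j \notin B r].
Definition basis_bar := {j : 'I_(size e) | `[< exists r, alive j r >]}.

Lemma alive_interval (i : basis_bar) : is_interval [set r | alive (val i) r].
Proof.
case: i => j Hj /=; have /asboolP [q Jq] := Hj; split; first by exists q.
  by move=> r /= /and3P [].
move=> r s t /= /and3P [r0 Kr _] /and3P [_ _ nBt] rs st.
rewrite /alive (le_trans r0 rs) (subvP (Kv_mono rs)) //=.
by apply: contra nBt; apply: subvP (B_mono st) _.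
Qed.

Lemma basis_gen_free r n (f : 'I_n -> basis_bar) : injective f ->
  (forall k, alive (val (f k)) r) -> \sum_k e`_(val (f k)) \in B r -> n = 0%N.
Proof.
case: n f => // n f fi fJ fB; exfalso; set j0 := val (f ord0).
have nB : e`_j0 \notin B r by case/and3P: (fJ ord0).
have := coord_span_filter e_free (subvP (e_B r) _ fB) nB.
rewrite linear_sum (bigD1 ord0) //= big1 => [|k nk].
  rewrite (@coord_free _ _ _ (in_tuple e) j0 j0 e_free) eqxx addr0.
  by move/eqP; rewrite oner_eq0.
rewrite (@coord_free _ _ _ (in_tuple e) _ j0 e_free); case: eqP => // /val_inj /fi ek.
by rewrite ek eqxx in nk.
Qed.

Lemma basis_gen_span r w : 0 <= r -> w \in Kv r -> exists n (f : 'I_n -> basis_bar),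
  (forall k, alive (val (f k)) r) /\ w - \sum_k e`_(val (f k)) \in B r.
Proof.
move=> r0 wK; pose c j := coord (in_tuple e) j w.
pose Q := [pred j | (c j != 0) && (e`_j \notin B r)].
have Q_alive j : Q j -> alive j r.
  move=> /andP [cj nB]; rewrite /alive r0 nB andbT.
  by apply: contraR cj => nK; rewrite /c (coord_span_filter e_free (subvP (e_Kv r) _ wK)).
have Q_bar (k : 'I_#|Q|) : `[< exists r, alive (enum_val k) r >].
  by apply/asboolP; exists r; apply: Q_alive (enum_valP k).
exists #|Q|, (fun k => exist _ (enum_val k) (Q_bar k)); split.
  by move=> k; apply: Q_alive (enum_valP k).
have we : w \in <<in_tuple e>>%VS by rewrite e_full memvf.
rewrite [X in X - _](coord_span we) -(big_enum_val (A := Q) (fun j => e`_j)) /=.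
rewrite [X in _ - X]big_mkcond /= -sumrB; apply: memv_suml => j _.
rewrite !inE -/(c j); case: (F2_cases (c j)) => ->.
  by rewrite eqxx scale0r subr0 mem0v.
rewrite oner_eq0 scale1r /=.
by case: (boolP (e`_j \in B r)) => ejB; rewrite ?subr0 // subrr mem0v.
Qed.

Lemma basis_interval_decomp :
  interval_decomp (fun r w => w \in Kv r) B
    (fun i : basis_bar => [set r | alive (val i) r]) (fun i _ => e`_(val i)).
Proof.
split.
- by split; [exact: alive_interval | move=> i r /and3P []].
- by move=> i r s _ _ _; rewrite subrr mem0v.
- move=> i r s /= /and3P [r0 Kr _] nJ rs; apply: contrapT => /negP nB.
  by apply: nJ; rewrite /alive (le_trans r0 rs) (subvP (Kv_mono rs)).
- by move=> r _ n f; apply: basis_gen_free.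
- by move=> r r0 w; apply: basis_gen_span.
Qed.

End BasisDecomposition.

Lemma exists_interval_decomp (R : realType) (T : finType) (Kv B : R -> {vspace chain T}) :
  (forall r s, r <= s -> (Kv r <= Kv s)%VS) -> (forall r s, r <= s -> (B r <= B s)%VS) ->
  exists (I : Type) (J : I -> set R) (v : I -> R -> chain T),
    interval_decomp (fun r w => w \in Kv r) B J v.
Proof.
move=> Kv_mono B_mono.
pose ext (C : R -> {vspace chain T}) (o : option R) := if o is Some r then C r else fullv.
have ext_chain C : (forall r s, r <= s -> (C r <= C s)%VS) ->
    forall o1 o2, (ext C o1 <= ext C o2)%VS \/ (ext C o2 <= ext C o1)%VS.
  move=> C_mono [r1|] [r2|] /=; rewrite ?subvf; auto.
  by case: (leP r1 r2) => h; [left | right]; apply: C_mono => //; apply: ltW.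
have [e [fe ef aK aB]] := exists_adapted_basis (ext_chain _ Kv_mono) (ext_chain _ B_mono)
  (ex_intro _ None erefl) (ex_intro _ None erefl).
have adapted_full C r : adapted (ext C) e -> (C r <= <<[seq x <- e | x \in C r]>>)%VS.
  by move/(_ (Some r)); rewrite /= ef capvf.
by eexists _, _, _; apply: (basis_interval_decomp Kv_mono B_mono fe ef
  (fun r => adapted_full _ r aK) (fun r => adapted_full _ r aB)).
Qed.

Lemma ch_coord (T : finType) (x : T) j : ch x 0 j = (enum_rank x == j)%:R.
Proof. by rewrite /ch mxE eqxx /= eq_sym. Qed.

Lemma chain_sum_ch (T : finType) (v : chain T) : v = \sum_x v 0 (enum_rank x) *: ch x.
Proof.
apply/matrixP => i j; rewrite (ord1 i) summxE (bigD1 (enum_val j)) //= big1.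
  by rewrite mxE ch_coord enum_valK eqxx mulr1 addr0.
move=> y nyj; rewrite mxE ch_coord; case: eqP => [eyj|]; last by rewrite mulr0.
by rewrite -eyj enum_rankK eqxx in nyj.
Qed.

Section Push.
Variables (T U : finType) (g : T -> U).

Lemma push_is_linear : linear (push g).
Proof.
move=> a u w; rewrite /push scaler_sumr -big_split; apply: eq_bigr => x _.
by rewrite !mxE scalerDl scalerA.
Qed.

HB.instance Definition _ :=
  GRing.isLinear.Build 'F_2 (chain T) (chain U) _ (push g) push_is_linear.

Lemma push_ch x : push g (ch x) = ch (g x).
Proof.
rewrite /push (bigD1 x) // big1 => [|y nyx].
  by rewrite /= addr0 ch_coord eqxx scale1r.
by rewrite ch_coord (inj_eq enum_rank_inj) eq_sym (negbTE nyx) scale0r.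
Qed.

Lemma push_inj : injective g -> injective (push g).
Proof.
move=> gi v w evw; apply/matrixP => i j; rewrite (ord1 i) -(enum_valK j).
have coord (u : chain T) x : push g u 0 (enum_rank (g x)) = u 0 (enum_rank x).
  rewrite /push summxE (bigD1 x) //= big1 => [|y nyx].
    by rewrite mxE ch_coord eqxx mulr1 addr0.
  by rewrite mxE ch_coord (inj_eq enum_rank_inj) (inj_eq gi) (negbTE nyx) mulr0.
by rewrite -!coord evw.
Qed.

End Push.

Lemma push_comp (T U W : finType) (g : U -> W) (h : T -> U) v :
  push g (push h v) = push (g \o h) v.
Proof. by rewrite linear_sum; apply: eq_bigr => x _; rewrite linearZ /= push_ch. Qed.

Lemma push_id (T : finType) (v : chain T) : push id v = v.
Proof. by rewrite [RHS]chain_sum_ch. Qed.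

Lemma mem_spanS (T : finType) (P : chain T -> Prop) w :
  P 0 -> (forall x y, P x -> P y -> P (x + y)) -> (w \in spanS P <-> P w).
Proof.
move=> P0 PD; split => [wS|Pw]; last first.
  by apply: memv_span; rewrite mem_filter mem_enum andbT; apply/asboolP.
set l := [seq w <- enum (chain T) | `[< P w >] ] in wS.
rewrite (coord_span (X := in_tuple l) wS); apply: (big_ind P) => // i _.
have : l`_i \in l by apply: mem_nth.
rewrite mem_filter => /andP [/asboolP Pi _].
by case: (F2_cases (coord (in_tuple l) i w)) => ->; rewrite ?scale0r ?scale1r.
Qed.

Lemma gap_above (R : realType) (l : seq R) r :
  exists2 eta, 0 < eta & forall t, t \in l -> r < t -> r + eta <= t.
Proof.
elim: l => [|t l [eta eta0 IH]]; first by exists 1.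
case: (ltP r t) => rt; last first.
  exists eta => // t'; rewrite inE => /orP [/eqP -> /(le_lt_trans rt)|/IH //].
  by rewrite ltxx.
exists (Num.min eta (t - r)); first by rewrite lt_min eta0 subr_gt0 rt.
move=> t'; rewrite inE => /orP [/eqP ->|/IH le_t' /le_t'].
  by rewrite -lerBrDl ge_min lexx orbT.
by apply: le_trans; rewrite lerD2l ge_min lexx.
Qed.

Section Boundaries.
Variables (R : realType) (T : finType) (d : T -> T -> R).

Lemma bdry_edge r x y : d x y <= r -> ch x + ch y \in bdry d r.
Proof. by move=> h; apply: memv_span; apply/mapP; exists (x, y); rewrite ?mem_enum. Qed.

Lemma bdry_sub r (U : {vspace chain T}) :
  (forall x y, d x y <= r -> ch x + ch y \in U) -> (bdry d r <= U)%VS.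
Proof. by move=> H; apply/span_subvP => w /mapP [[x y]]; rewrite mem_enum => /H + ->. Qed.

Lemma bdry_mono r s : r <= s -> (bdry d r <= bdry d s)%VS.
Proof. by move=> rs; apply: bdry_sub => x y h; apply: bdry_edge; apply: le_trans h rs. Qed.

Lemma bdryD_max r1 r2 v1 v2 : v1 \in bdry d r1 -> v2 \in bdry d r2 ->
  v1 + v2 \in bdry d (Num.max r1 r2).
Proof.
move=> v1B v2B; apply: memvD.
  by apply: subvP (bdry_mono _) _ v1B; rewrite le_max lexx.
by apply: subvP (bdry_mono _) _ v2B; rewrite le_max lexx orbT.
Qed.

Lemma bdry_eq0 r : (forall x y, d x y <= r -> x = y) -> bdry d r = 0%VS.
Proof.
move=> H; apply/eqP; rewrite -subv0; apply: bdry_sub => x y /H ->.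
by rewrite F2_addrr mem0v.
Qed.

Lemma bdry0 : (forall x y, 0 <= d x y) -> (forall x y, d x y = 0 -> x = y) ->
  bdry d 0 = 0%VS.
Proof.
move=> d_ge0 d_sep; apply: bdry_eq0 => x y h.
by apply/d_sep/eqP; rewrite eq_le h d_ge0.
Qed.

Lemma bdry_right_const r : exists2 eta, 0 < eta &
  forall s, r <= s -> s < r + eta -> (bdry d s <= bdry d r)%VS.
Proof.
have [eta eta0 gap] := gap_above [seq d p.1 p.2 | p <- enum [pred p : T * T | true]] r.
exists eta => // s rs sl; apply: bdry_sub => x y h; apply: bdry_edge.
rewrite leNgt; apply/negP => rxy.
have /gap/(_ rxy) le_xy : d x y \in [seq d p.1 p.2 | p <- enum [pred p : T * T | true]].
  by apply/mapP; exists (x, y); rewrite ?mem_enum.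
by have := le_lt_trans (le_trans le_xy h) sl; rewrite ltxx.
Qed.

Lemma push_bdry (U : finType) (g : T -> U) r (V : {vspace chain U}) w :
  (forall x y, d x y <= r -> push g (ch x + ch y) \in V) ->
  w \in bdry d r -> push g w \in V.
Proof.
move=> H; suff : (bdry d r <= linfun (push g) @^-1: V)%VS.
  by move/subvP/[apply]; rewrite -memv_preim lfunE.
by apply: bdry_sub => x y h; rewrite -memv_preim lfunE; apply: H.
Qed.

Lemma bdry_augmentation r w : w \in bdry d r -> push (fun _ => tt) w = 0.
Proof.
move=> wB; apply/eqP; rewrite -memv0; apply: push_bdry wB => x y _.
by rewrite linearD /= !push_ch F2_addrr mem0v.
Qed.

Lemma mem_bdry_large r w : (forall x y, d x y <= r) -> push (fun _ => tt) w = 0 ->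
  w \in bdry d r.
Proof.
move=> large w0; have [x0 _|T0] := pickP (fun _ : T => true); last first.
  by rewrite [w]chain_sum_ch big1 ?mem0v // => p; have := T0 p.
have sw : \sum_x w 0 (enum_rank x) = 0.
  move: w0; rewrite /push => /matrixP /(_ 0 (enum_rank tt)); rewrite summxE mxE.
  by apply: etrans; apply: eq_bigr => x _; rewrite mxE ch_coord eqxx mulr1.
have -> : w = \sum_x w 0 (enum_rank x) *: (ch x + ch x0).
  under [RHS]eq_bigr do rewrite scalerDr.
  by rewrite big_split /= -scaler_suml sw scale0r addr0 -chain_sum_ch.
by apply: memv_suml => x _; apply/memvZ/bdry_edge.
Qed.

End Boundaries.

Section Preimage.
Variables (F : fieldType) (uT vT : vectType F) (f : 'Hom(uT, vT)).

Lemma dim_lpreim W : (W <= limg f)%VS ->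
  \dim (f @^-1: W) = (\dim W + \dim (lker f))%N.
Proof.
move=> Wf; have := limg_ker_dim f (f @^-1: W); rewrite lpreimK // addnC => <-.
suff -> : (f @^-1: W :&: lker f)%VS = lker f by [].
by apply/capv_idPr; rewrite -lpreim0 lpreimS ?sub0v.
Qed.

Lemma lpreimD W1 W2 : (W1 <= limg f)%VS -> (W2 <= limg f)%VS ->
  (f @^-1: W1 + f @^-1: W2)%VS = (f @^-1: (W1 + W2))%VS.
Proof.
move=> W1f W2f; apply/eqP; rewrite eqEsubv subv_add !lpreimS ?addvSl ?addvSr //=.
apply/subvP => x; rewrite -memv_preim => /memv_addP [u1 u1W [u2 u2W e]].
have /memv_imgP [y1 _ e1] := subvP W1f _ u1W.
have /memv_imgP [y2 _ e2] := subvP W2f _ u2W.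
have -> : x = (x - (y1 + y2) + y1) + y2 by rewrite -addrA subrK.
apply: memvD; last by apply: subvP (addvSr _ _) _ _; rewrite -memv_preim -e2.
apply: subvP (addvSl _ _) _ _; apply: memvD; last by rewrite -memv_preim -e1.
by rewrite -memv_preim linearB linearD /= e -e1 -e2 subrr mem0v.
Qed.

End Preimage.

Section KernelModule.
Variables (R : realType) (TZ TZ' : finType) (dZ : TZ -> TZ -> R).
Hypothesis hZ : is_metric dZ.
Variables (X : {set TZ}) (X' : {set TZ'}) (aZ : TZ -> TZ') (aZ' : TZ' -> TZ).
Hypothesis haX : forall x, x \in X -> aZ x \in X'.
Variable delta : R.
Hypothesis delta_gt0 : 0 < delta.

Local Notation Y := (Ytype X X' aZ aZ').
Local Notation pi := (piY X X' aZ aZ').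
Local Notation dX := (dsub dZ X).
Local Notation K := (ker_fdelta dZ X X' aZ aZ').
Local Notation BY := (bdry (dYdelta X X' aZ aZ' dZ delta)).

Let dZ_ge0 x y : 0 <= dZ x y. Proof. by case: hZ. Qed.
Let dZ_eq0 x y : dZ x y = 0 <-> x = y. Proof. by case: hZ. Qed.
Let dZxx x : dZ x x = 0. Proof. exact/dZ_eq0. Qed.

Lemma bdryZ_0 : bdry dZ 0 = 0%VS.
Proof. by apply: bdry0 => // x y /dZ_eq0. Qed.

Lemma bdryX_0 : bdry dX 0 = 0%VS.
Proof. by apply: bdry0 => [x y|x y /dZ_eq0/val_inj //]; apply: dZ_ge0. Qed.

Lemma push_val_bdry a v : v \in bdry dX a -> push val v \in bdry dZ a.
Proof. by apply: push_bdry => x y h; rewrite linearD /= !push_ch; apply: bdry_edge. Qed.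

Lemma piY_section_subproof (x : pts X) : Ypred X X' aZ aZ' (val x, aZ (val x)).
Proof. by rewrite /Ypred /= (valP x) haX ?(valP x) ?eqxx. Qed.

Definition piY_section (x : pts X) : Y :=
  exist _ (val x, aZ (val x)) (piY_section_subproof x).

Lemma push_piY_section (v : chain (pts X)) : push pi (push piY_section v) = v.
Proof.
by rewrite push_comp -[RHS]push_id; congr push; apply: funext => x; apply: val_inj.
Qed.

Lemma dY_le p q : dYdelta X X' aZ aZ' dZ delta p q <= delta + dZ (val p).1 (val q).1.
Proof. by rewrite /dYdelta; case: eqP => // _; rewrite addr_ge0 // ltW. Qed.

Lemma bdryY_small r : r < delta -> BY r = 0%VS.
Proof.
move=> rd; apply: bdry_eq0 => p q; rewrite /dYdelta; case: eqP => // _.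
by move=> /le_lt_trans/(_ rd); rewrite gtrDl ltNge dZ_ge0.
Qed.

Lemma sub_piY_section_bdry w : w - push piY_section (push pi w) \in BY delta.
Proof.
rewrite push_comp {1}[w]chain_sum_ch /push -sumrB; apply: memv_suml => p _.
rewrite -scalerBr; apply: memvZ; rewrite F2_subrE; apply: bdry_edge.
by apply: le_trans (dY_le _ _) _; rewrite /= dZxx addr0.
Qed.

Lemma mem_bdryY_shift a w : 0 <= a -> (w \in BY (a + delta) <-> push pi w \in bdry dX a).
Proof.
move=> a0; split => wB.
  apply: push_bdry wB => p q h; rewrite linearD /= !push_ch.
  case: (eqVneq p q) => [->|npq]; first by rewrite F2_addrr mem0v.
  by apply: bdry_edge; move: h; rewrite /dYdelta (negbTE npq) addrC lerD2r.
rewrite -(subrK (push piY_section (push pi w)) w); apply: memvD.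
  by apply: subvP (bdry_mono _ _) _ (sub_piY_section_bdry w); rewrite lerDr.
apply: push_bdry wB => x y h; rewrite linearD /= !push_ch; apply: bdry_edge.
by apply: le_trans (dY_le _ _) _; rewrite addrC lerD2r.
Qed.

Lemma ker_fdelta_mono r s w : r <= s -> K r w -> K s w.
Proof. by move=> rs; apply: subvP (bdry_mono _ rs) _. Qed.

Lemma ker_fdelta0 r : K r 0.
Proof. by rewrite /ker_fdelta !linear0 mem0v. Qed.

Lemma ker_fdeltaD r x y : K r x -> K r y -> K r (x + y).
Proof. by rewrite /ker_fdelta !linearD; apply: memvD. Qed.

Lemma bdryY_shift_K a x : 0 <= a -> x \in BY (a + delta) -> K a x.
Proof. by move=> a0 /(mem_bdryY_shift _ a0) /push_val_bdry. Qed.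

Lemma bdryY_sub_K r x : 0 <= r -> x \in BY r -> K r x.
Proof.
move=> r0 xB; case: (ltP r delta) => rd.
  by move: xB; rewrite bdryY_small // memv0 => /eqP ->; apply: ker_fdelta0.
have rd0 : 0 <= r - delta by rewrite subr_ge0.
apply: ker_fdelta_mono (bdryY_shift_K rd0 _); first by rewrite gerBl ltW.
by rewrite subrK.
Qed.

Lemma ker_fdelta0_piY x : K 0 x <-> push pi x = 0.
Proof.
rewrite /ker_fdelta bdryZ_0 memv0 -(linear0 (push (val : pts X -> TZ))).
by split => [/eqP/(push_inj val_inj)|->].
Qed.

Lemma ker_fdelta0_sub_bdryY x : K 0 x -> x \in BY delta.
Proof.
by move/ker_fdelta0_piY => e; have := sub_piY_section_bdry x; rewrite e linear0 subr0.
Qed.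

Lemma ker_fdelta_sub_bdryY_large :
  exists D, forall r, D <= r -> forall x, K r x -> x \in BY r.
Proof.
exists (delta + \sum_(p : TZ * TZ) dZ p.1 p.2) => r Dr x Kx.
apply: mem_bdry_large; last by have := bdry_augmentation Kx; rewrite !push_comp.
move=> p q; apply: le_trans (dY_le _ _) (le_trans _ Dr); rewrite lerD2l.
by rewrite (bigD1 ((val p).1, (val q).1)) //= lerDl sumr_ge0.
Qed.

Lemma ker_fdelta_right_const r : exists2 eta, 0 < eta &
  forall s, r <= s -> s < r + eta -> forall x, K s x -> K r x.
Proof.
have [eta eta0 H] := bdry_right_const dZ r.
by exists eta => // s rs sl x; apply: subvP (H _ rs sl) _.
Qed.

Lemma mem_kerp_img a u :
  u \in kerp_img dZ X a <-> exists v, v \in bdry dX a /\ u = push val v.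
Proof.
rewrite /kerp_img bdryZ_0 addv0; apply: mem_spanS => [|_ _ [v1 [v1B ->]] [v2 [v2B ->]]].
  by exists 0; rewrite mem0v linear0.
by exists (v1 + v2); rewrite memvD ?linearD.
Qed.

Lemma mem_kerm_img a u : 0 < a -> (u \in kerm_img dZ X a <->
  exists r, 0 <= r < a /\ exists v, v \in bdry dX r /\ u = push val v).
Proof.
move=> a0; rewrite /kerm_img bdryZ_0 addv0; apply: mem_spanS.
  by exists 0; rewrite lexx a0; split => //; exists 0; rewrite mem0v linear0.
move=> _ _ [r1 [/andP [r10 r1a] [v1 [v1B ->]]]] [r2 [/andP [r20 r2a] [v2 [v2B ->]]]].
exists (Num.max r1 r2); rewrite le_max r10 gt_max r1a r2a; split => //.
by exists (v1 + v2); rewrite linearD bdryD_max.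
Qed.

Lemma mem_kermU b u : 0 < b ->
  (u \in kermU dZ b <-> exists r, 0 <= r < b /\ u \in bdry dZ r).
Proof.
move=> b0; rewrite /kermU bdryZ_0 addv0; apply: mem_spanS.
  by exists 0; rewrite lexx b0 mem0v.
move=> u1 u2 [r1 [/andP [r10 r1b] u1B]] [r2 [/andP [r20 r2b] u2B]].
by exists (Num.max r1 r2); rewrite le_max r10 gt_max r1b r2b bdryD_max.
Qed.

Definition fdelta : 'Hom(chain Y, chain TZ) := linfun (push (fun p : Y => (val p).1)).

Lemma fdeltaE w : fdelta w = push val (push pi w).
Proof. by rewrite lfunE push_comp. Qed.

Lemma push_val_in_limg (v : chain (pts X)) : push val v \in limg fdelta.
Proof. by rewrite -(push_piY_section v) -fdeltaE memv_img ?memvf. Qed.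

Lemma kerp_img_sub_limg a : (kerp_img dZ X a <= limg fdelta)%VS.
Proof. by apply/subvP => u /mem_kerp_img [w [_ ->]]; apply: push_val_in_limg. Qed.

Lemma kerm_img_sub_limg a : 0 < a -> (kerm_img dZ X a <= limg fdelta)%VS.
Proof.
move=> a0; apply/subvP => u /(mem_kerm_img _ a0) [r [_ [w [_ ->]]]].
exact: push_val_in_limg.
Qed.

Lemma fdelta_kerp_img a x : 0 <= a ->
  fdelta x \in kerp_img dZ X a <-> x \in BY (a + delta).
Proof.
move=> a0; rewrite mem_kerp_img mem_bdryY_shift // fdeltaE.
by split => [[v [vB /(push_inj val_inj) ->]] //|]; exists (push pi x).
Qed.

Lemma fdelta_kerm_img a x : 0 < a ->
  fdelta x \in kerm_img dZ X a <-> exists2 s, s < a + delta & x \in BY s.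
Proof.
move=> a0; rewrite mem_kerm_img // fdeltaE; split.
  move=> [r [/andP [r0 ra] [v [vB /(push_inj val_inj) e]]]].
  by exists (r + delta); rewrite ?ltrD2r // mem_bdryY_shift // e.
move=> [s sa xB]; case: (ltP s delta) => sd.
  move: xB; rewrite bdryY_small // memv0 => /eqP ->.
  by exists 0; rewrite lexx a0; split => //; exists 0; rewrite mem0v linear0.
have sd0 : 0 <= s - delta by rewrite subr_ge0.
exists (s - delta); rewrite sd0 ltrBlDr sa; split => //.
by exists (push pi x); rewrite -mem_bdryY_shift // subrK.
Qed.

Lemma fdelta_kerpU b x : (fdelta x \in kerpU dZ b) = (push val (push pi x) \in bdry dZ b).
Proof. by rewrite fdeltaE. Qed.

Lemma mem_lpreim_kerp_kerpU a b x : 0 <= a ->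
  x \in (fdelta @^-1: (kerp_img dZ X a :&: kerpU dZ b))%VS <->
  K b x /\ x \in BY (a + delta).
Proof.
move=> a0; rewrite -memv_preim memv_cap fdelta_kerpU.
split; first by case/andP => /(fdelta_kerp_img _ a0).
by case=> Kx /(fdelta_kerp_img _ a0) xB; apply/andP.
Qed.

Lemma mem_lpreim_kerm_kerpU a b x : 0 < a ->
  x \in (fdelta @^-1: (kerm_img dZ X a :&: kerpU dZ b))%VS <->
  K b x /\ exists2 s, s < a + delta & x \in BY s.
Proof.
move=> a0; rewrite -memv_preim memv_cap fdelta_kerpU.
split; first by case/andP => /(fdelta_kerm_img _ a0).
by case=> Kx /(fdelta_kerm_img _ a0) xB; apply/andP.
Qed.

Lemma mem_lpreim_kerp_kermU a b x : 0 <= a -> 0 < b ->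
  x \in (fdelta @^-1: (kerp_img dZ X a :&: kermU dZ b))%VS <->
  x \in BY (a + delta) /\ (x = 0 \/ exists r, [/\ 0 <= r, r < b & K r x]).
Proof.
move=> a0 b0; rewrite -memv_preim memv_cap; split.
  case/andP => /(fdelta_kerp_img _ a0) xB /(mem_kermU _ b0) [r [/andP [r0 rb] fB]].
  by split => //; right; exists r; split; rewrite // /ker_fdelta -fdeltaE.
case=> /(fdelta_kerp_img _ a0) xB born; rewrite xB; apply/(mem_kermU _ b0).
case: born => [->|[r [r0 rb Kr]]]; first by exists 0; rewrite lexx b0 linear0 mem0v.
by exists r; rewrite r0 rb fdeltaE; split.
Qed.

Lemma mem_kerh0_space x :
  x \in spanS (fun w : chain Y => push pi w \in bdry dX 0) <-> K 0 x /\ x \in BY delta.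
Proof.
apply: iff_trans (mem_spanS _ _ _) _ => [||]; first by rewrite linear0 mem0v.
  by move=> y z; rewrite linearD; apply: memvD.
rewrite bdryX_0 memv0; split => [/eqP e|[/ker_fdelta0_piY -> _] //].
have Kx : K 0 x by apply/ker_fdelta0_piY.
by split => //; apply: ker_fdelta0_sub_bdryY.
Qed.

Lemma exists_decomp_ker_fdelta :
  exists (I : Type) (J : I -> set R) (v : I -> R -> chain Y), interval_decomp K BY J v.
Proof.
have memK r w : w \in spanS (K r) <-> K r w.
  by apply: mem_spanS; [apply: ker_fdelta0 | apply: ker_fdeltaD].
have K_vspace : (fun r w => (w \in spanS (K r) : Prop)) = K.
  by apply: funext => r; apply: funext => w; apply: propext.
rewrite -K_vspace; apply: exists_interval_decomp; last exact: bdry_mono.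
by move=> r s rs; apply/subvP => w /memK Kw; apply/memK/(ker_fdelta_mono rs).
Qed.

Section Bars.
Variables (I : Type) (J : I -> set R) (v : I -> R -> chain Y).
Hypothesis hD : interval_decomp K BY J v.

Lemma bar_shape_ker_fdelta i :
  (exists a b, 0 < b <= a /\ J i = [set r | b <= r < a + delta])
    \/ J i = [set r | 0 <= r < delta].
Proof.
have [b [c [bc Ji]]] := bar_Ico hD (bdry_mono _) ker_fdelta_right_const
  (bdry_right_const _) ker_fdelta_sub_bdryY_large i.
exact (bar_delta_shape hD (bdry_mono _) delta_gt0 bdryY_small bdryY_shift_K
  ker_fdelta0_sub_bdryY bc Ji).
Qed.

Lemma mult_Ico_ker_fdelta a b : 0 < b <= a ->
  has_card (fun i => J i = [set r | b <= r < a + delta]) (Mf0 dZ X a b).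
Proof.
move=> /andP [b0 ba]; have a0 := lt_le_trans b0 ba.
have PZ := subv_trans (capvSl _ (kerpU dZ b)) (kerp_img_sub_limg a).
have WaZ := subv_trans (capvSl _ (kerpU dZ b)) (kerm_img_sub_limg a0).
have WbZ := subv_trans (capvSl _ (kermU dZ b)) (kerp_img_sub_limg a).
rewrite /Mf0 -(subnDr (\dim (lker fdelta))) -!dim_lpreim ?subv_add ?PZ ?WaZ //.
rewrite -lpreimD //.
apply (count_Ico_bars hD (bdry_mono _) ker_fdelta_mono bdryY_sub_K (ltW b0)) => [|x|x|x].
- by apply: le_lt_trans ba _; rewrite ltrDl.
- exact: mem_lpreim_kerm_kerpU.
- exact: mem_lpreim_kerp_kermU (ltW a0) b0.
- exact: mem_lpreim_kerp_kerpU (ltW a0).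
Qed.

Lemma mult_0delta_ker_fdelta :
  has_card (fun i => J i = [set r | 0 <= r < delta]) (dimker_h0 dZ X X' aZ aZ' delta).
Proof.
rewrite /dimker_h0 bdryY_small // -(addv0 0%VS).
apply (count_Ico_bars hD (bdry_mono _) ker_fdelta_mono bdryY_sub_K (lexx 0)) => [//|x|x|x].
- rewrite memv0; split => [/eqP ->|[_ [s sd]]]; last by rewrite bdryY_small // memv0.
  by split; [exact: ker_fdelta0 | exists 0; rewrite ?mem0v].
- rewrite memv0; split => [/eqP ->|[_ [->//|[r [r0 /(le_lt_trans r0)]]]]].
    by rewrite mem0v; split => //; left.
  by rewrite ltxx.
- exact: mem_kerh0_space.
Qed.

End Bars.

End KernelModule.

Unset Implicit Arguments.

Theorem lemma6p6 (R : realType)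
  (TZ TZ' : finType) (dZ : TZ -> TZ -> R) (dZ' : TZ' -> TZ' -> R)
  (hZ : is_metric dZ) (hZ' : is_metric dZ')
  (X : {set TZ}) (X' : {set TZ'}) (eps : R)
  (heps : eps = dGH_pair dZ dZ' [set x | x \in X] [set x' | x' \in X'])
  (M : Type) (dM : M -> M -> R) (hM : is_metric dM)
  (gZ : TZ -> M) (gZ' : TZ' -> M)
  (hgZ : isometric dZ dM gZ) (hgZ' : isometric dZ' dM gZ')
  (hHX : hausdorff dM (gZ @` [set x | x \in X]) (gZ' @` [set x' | x' \in X']) <= eps)
  (hHZ : hausdorff dM (gZ @` setT) (gZ' @` setT) <= eps)
  (aZ : TZ -> TZ') (aZ' : TZ' -> TZ)
  (haX : forall x, x \in X -> aZ x \in X')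
  (haX' : forall x', x' \in X' -> aZ' x' \in X)
  (hmv : forall z, dM (gZ z) (gZ' (aZ z)) <= eps)
  (hmv' : forall z', dM (gZ (aZ' z')) (gZ' z') <= eps)
  (delta : R) (hdelta : 0 < delta) :
  let K := ker_fdelta dZ X X' aZ aZ' in
  let B := bdry (dYdelta X X' aZ aZ' dZ delta) in
  (exists (I : Type) (J : I -> set R) (v : I -> R -> chain (Ytype X X' aZ aZ')),
      interval_decomp K B J v) /\
  (forall (I : Type) (J : I -> set R) (v : I -> R -> chain (Ytype X X' aZ aZ')),
    interval_decomp K B J v ->
    [/\ (forall i, (exists a b, 0 < b <= a /\ J i = [set r | b <= r < a + delta])
                   \/ J i = [set r | 0 <= r < delta]),
        (forall a b, 0 < b <= a ->
           has_card (fun i => J i = [set r | b <= r < a + delta]) (Mf0 dZ X a b))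
      & has_card (fun i => J i = [set r | 0 <= r < delta]) (dimker_h0 dZ X X' aZ aZ' delta)]).
Proof.
move=> K B; split; first exact: exists_decomp_ker_fdelta.
move=> I J v hD; split.
- exact (bar_shape_ker_fdelta hZ haX hdelta hD).
- exact (mult_Ico_ker_fdelta hZ haX hdelta hD).
- exact (mult_0delta_ker_fdelta hZ haX hdelta hD).
Qed.
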